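(* Let $\triangle ABC$ have side lengths $a=|BC|>b=|CA|>c=|AB|$ and angles $\alpha=\angle A$, $\beta=\angle B$, $\gamma=\angle C$. For $x\in\{a,b,c\}$ let $W_x$ denote the largest area of an equilateral triangle contained in the closed triangle $\triangle ABC$ having one of its sides lying on side $x$. (i) If $60^\circ<\beta<80^\circ<\alpha<90^\circ$, $\alpha/2+\beta<120^\circ$ and $\alpha+\beta/2\ge 120^\circ$, then the minimum of $W_a,W_b,W_c$ is attained on the middle side $b$, and the maximum is attained on both the short side $c$ and the long side $a$ when $\alpha+\beta/2=120^\circ$, and on the long side $a$ when $\alpha+\beta/2>120^\circ$. (ii) If $75^\circ<\beta<90^\circ$, $80^\circ<\alpha<90^\circ$ and $\alpha/2+\beta\ge 120^\circ$, then the maximum of $W_a,W_b,W_c$ is attained on the long side $a$, and the minimum is attained on the short side $c$ when $\alpha/2+\beta>120^\circ$, and on both the short side $c$ and the middle side $b$ when $\alpha/2+\beta=120^\circ$.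
   Context: An equilateral triangle of largest area contained in $\triangle ABC$ with one side lying on a given side of $\triangle ABC$ is called the wedged equilateral triangle (WET) on that side; it need not have all three vertices on the boundary of $\triangle ABC$. The max (resp. min) WET is the one of largest (resp. smallest) area among the three sides. *)

From Stdlib Require Import Reals Lra.
Open Scope R_scope.

Definition pt := (R * R)%type.

Definition pdist (P Q : pt) : R :=
  sqrt ((fst P - fst Q) ^ 2 + (snd P - snd Q) ^ 2).

Definition angle (V P Q : pt) : R :=
  acos (((fst P - fst V) * (fst Q - fst V) + (snd P - snd V) * (snd Q - snd V))
        / (pdist V P * pdist V Q)).

Definition nondegenerate (A B C : pt) : Prop :=
  (fst B - fst A) * (snd C - snd A) - (snd B - snd A) * (fst C - fst A) <> 0.

Definition in_triangle (A B C X : pt) : Prop :=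
  exists u v w : R, 0 <= u /\ 0 <= v /\ 0 <= w /\ u + v + w = 1 /\
    fst X = u * fst A + v * fst B + w * fst C /\
    snd X = u * snd A + v * snd B + w * snd C.

Definition on_segment (P Q X : pt) : Prop :=
  exists t : R, 0 <= t <= 1 /\
    fst X = (1 - t) * fst P + t * fst Q /\ snd X = (1 - t) * snd P + t * snd Q.

Definition triangle_subset (P Q R0 A B C : pt) : Prop :=
  forall X, in_triangle P Q R0 X -> in_triangle A B C X.

Definition equilateral (P Q R0 : pt) : Prop :=
  0 < pdist P Q /\ pdist P Q = pdist Q R0 /\ pdist Q R0 = pdist R0 P.

Definition eq_area (s : R) : R := sqrt 3 / 4 * s ^ 2.

Definition wedged_area (A B C U V : pt) (w : R) : Prop :=
  exists P Q R0 : pt,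
    equilateral P Q R0 /\ on_segment U V P /\ on_segment U V Q /\
    triangle_subset P Q R0 A B C /\ w = eq_area (pdist P Q).

Definition is_WET_area (A B C U V : pt) (W : R) : Prop :=
  wedged_area A B C U V W /\ (forall w, wedged_area A B C U V w -> w <= W).

Definition deg (x : R) : R := x * PI / 180.

(* An equilateral triangle with its base PQ on the side UV of a triangle UVW lies in UVW
   iff its apex does.  With K twice the area of UVW and d_U, d_V the dot products at the base
   vertices, the apex sits at height (sqrt 3 / 2) |PQ| above the midpoint of PQ, and the two
   remaining side constraints give |PQ| <= 2 K |UV| / (max(K, sqrt 3 d_U) + max(K, sqrt 3 d_V)),
   a bound that is attained.  In terms of angles this is the whole side when both base angles
   are at least 60 degrees, and |UV| sin V / sin (V + 60) when only the angle at V is smaller.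
   In both regimes of the theorem alpha, beta > 60 > gamma, so by the law of sines the three
   WET sides are proportional to sin alpha, sin beta and sin (gamma + 60), and every comparison
   is decided by the sign of
     sin alpha - sin (gamma + 60) = 2 cos (120 - beta / 2) sin (alpha + beta / 2 - 120)
   or of the same expression with alpha and beta exchanged. *)

From Stdlib Require Import Reals Lra Psatz.
Open Scope R_scope.

(** * Vectors and affine coordinates on a side *)

Definition dotp (U V W : pt) : R :=
  (fst V - fst U) * (fst W - fst U) + (snd V - snd U) * (snd W - snd U).

Definition crs (U V W : pt) : R :=
  (fst V - fst U) * (snd W - snd U) - (snd V - snd U) * (fst W - fst U).

Lemma crs_rot U V W : crs V W U = crs U V W.
Proof. unfold crs; ring. Qed.

Lemma crs_rot_neq0 A B C : crs A B C <> 0 -> crs B C A <> 0 /\ crs C A B <> 0.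
Proof. intro Hcr. rewrite (crs_rot B C A), (crs_rot A B C). split; exact Hcr. Qed.

Lemma crs_swap_l U V W : crs V U W = - crs U V W.
Proof. unfold crs; ring. Qed.

Lemma crs_swap_r U V W : crs U W V = - crs U V W.
Proof. unfold crs; ring. Qed.

Lemma dotp_comm U V W : dotp U V W = dotp U W V.
Proof. unfold dotp; ring. Qed.

Lemma dotp_swap U V W : dotp V U W = dotp U V V - dotp U V W.
Proof. unfold dotp; ring. Qed.

Lemma dotp_add_rot A B C : dotp A B C + dotp B C A = dotp A B B.
Proof. unfold dotp; ring. Qed.

Lemma dotp_mul_rot A B C :
  dotp A B C * dotp B C A + dotp A B B * dotp C A B = crs A B C ^ 2.
Proof. unfold dotp, crs; ring. Qed.

Lemma lagrange_identity U V W :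
  dotp U V V * dotp U W W = dotp U V W ^ 2 + crs U V W ^ 2.
Proof. unfold dotp, crs; ring. Qed.

Lemma pdist_sym U V : pdist U V = pdist V U.
Proof. unfold pdist; f_equal; ring. Qed.

Lemma dotp_self_nonneg U V : 0 <= dotp U V V.
Proof. unfold dotp; apply Rplus_le_le_0_compat; apply Rle_0_sqr. Qed.

Lemma pdist_sq U V : pdist U V ^ 2 = dotp U V V.
Proof.
  unfold pdist. rewrite pow2_sqrt by (apply Rplus_le_le_0_compat; apply pow2_ge_0).
  unfold dotp; ring.
Qed.

Lemma dotp_self_pos U V W : crs U V W <> 0 -> 0 < dotp U V V.
Proof.
  intro Hcr. pose proof (lagrange_identity U V W) as Hl.
  pose proof (dotp_self_nonneg U V). pose proof (dotp_self_nonneg U W).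
  destruct (Req_dec (dotp U V V) 0) as [E|]; [|lra].
  rewrite E in Hl. exfalso. apply Hcr. nra.
Qed.

Lemma pdist_pos U V W : crs U V W <> 0 -> 0 < pdist U V.
Proof.
  intro Hcr. unfold pdist. apply sqrt_lt_R0.
  pose proof (dotp_self_pos U V W Hcr). unfold dotp in *. lra.
Qed.

Lemma pdist_pos_r U V W : crs U V W <> 0 -> 0 < pdist U W.
Proof. intro Hcr. apply (pdist_pos U W V). rewrite crs_swap_r. intro; apply Hcr; lra. Qed.

Definition frame (U V W : pt) (x y : R) : pt :=
  (fst U + x * (fst V - fst U) + y * (fst W - fst U),
   snd U + x * (snd V - snd U) + y * (snd W - snd U)).

Definition frame_norm2 (U V W : pt) (x y : R) : R :=
  x ^ 2 * dotp U V V + 2 * x * y * dotp U V W + y ^ 2 * dotp U W W.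

Lemma pdist_frame U V W x1 y1 x2 y2 :
  pdist (frame U V W x1 y1) (frame U V W x2 y2) =
  sqrt (frame_norm2 U V W (x1 - x2) (y1 - y2)).
Proof. unfold pdist, frame, frame_norm2, dotp; simpl; f_equal; ring. Qed.

Lemma pdist_frame_base U V W p q :
  pdist (frame U V W p 0) (frame U V W q 0) = Rabs (q - p) * pdist U V.
Proof.
  rewrite pdist_frame. unfold pdist.
  replace (frame_norm2 U V W (p - q) (0 - 0)) with
    ((q - p) ^ 2 * ((fst U - fst V) ^ 2 + (snd U - snd V) ^ 2))
    by (unfold frame_norm2, dotp; ring).
  rewrite sqrt_mult_alt, <- Rsqr_pow2, sqrt_Rsqr_abs; [reflexivity | apply pow2_ge_0].
Qed.

Lemma frame_norm2_complete U V W x y :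
  dotp U V V * frame_norm2 U V W x y =
  (x * dotp U V V + y * dotp U V W) ^ 2 + (y * crs U V W) ^ 2.
Proof. unfold frame_norm2, dotp, crs; ring. Qed.

Lemma frame_norm2_nonneg U V W x y : 0 <= frame_norm2 U V W x y.
Proof.
  replace (frame_norm2 U V W x y) with
    ((x * (fst V - fst U) + y * (fst W - fst U)) ^ 2 +
     (x * (snd V - snd U) + y * (snd W - snd U)) ^ 2)
    by (unfold frame_norm2, dotp; ring).
  apply Rplus_le_le_0_compat; apply pow2_ge_0.
Qed.

Lemma pt_eq (X Y : pt) : fst X = fst Y -> snd X = snd Y -> X = Y.
Proof. destruct X, Y; simpl; intros -> ->; reflexivity. Qed.

Lemma on_segment_frame U V W X :
  on_segment U V X <-> exists t, 0 <= t <= 1 /\ X = frame U V W t 0.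
Proof.
  split.
  - intros (t & Ht & H1 & H2). exists t. split; [exact Ht|].
    apply pt_eq; simpl; lra.
  - intros (t & Ht & ->). exists t. simpl. repeat split; lra.
Qed.

Lemma in_triangle_frame U V W X :
  in_triangle U V W X <->
  exists x y, 0 <= x /\ 0 <= y /\ x + y <= 1 /\ X = frame U V W x y.
Proof.
  split.
  - intros (u & x & y & Hu & Hx & Hy & Hs & H1 & H2). exists x, y.
    repeat split; try lra. apply pt_eq; simpl; nra.
  - intros (x & y & Hx & Hy & Hs & ->). exists (1 - x - y), x, y.
    simpl. repeat split; lra.
Qed.

Lemma triangle_subset_of_vertices P Q R0 U V W :
  in_triangle U V W P -> in_triangle U V W Q -> in_triangle U V W R0 ->
  triangle_subset P Q R0 U V W.
Proof.
  rewrite !(in_triangle_frame U V W).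
  intros (x1 & y1 & ? & ? & ? & ->) (x2 & y2 & ? & ? & ? & ->)
    (x3 & y3 & ? & ? & ? & ->) X (u & v & w & ? & ? & ? & Hs & HX1 & HX2).
  apply in_triangle_frame.
  exists (u * x1 + v * x2 + w * x3), (u * y1 + v * y2 + w * y3).
  repeat split; try nra.
  replace u with (1 - v - w) in * by lra.
  apply pt_eq; simpl in *; [rewrite HX1 | rewrite HX2]; ring.
Qed.

(** * Equilateral triangles standing on a side *)

Lemma sqrt_eq_iff x y : 0 <= x -> 0 <= y -> sqrt x = sqrt y <-> x = y.
Proof. split; [apply sqrt_inj; assumption | intros ->; reflexivity]. Qed.

Lemma nonneg_eq_iff_sq x y : 0 <= x -> 0 <= y -> x = y <-> x ^ 2 = y ^ 2.
Proof. split; [intros ->; reflexivity | intro; nra]. Qed.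

Lemma height_eq_iff_sq w K e L2 : 0 <= w -> 0 <= L2 ->
  2 * w * Rabs K = sqrt 3 * Rabs e * L2 <-> 4 * (w * K) ^ 2 = 3 * (e * L2) ^ 2.
Proof.
  intros Hw HL2. pose proof Rlt_sqrt3_0. pose proof (Rabs_pos K). pose proof (Rabs_pos e).
  rewrite nonneg_eq_iff_sq by (apply Rmult_le_pos; nra).
  rewrite !Rpow_mult_distr, !pow2_abs, <- (Rsqr_pow2 (sqrt 3)), Rsqr_sqrt by lra.
  split; intro; lra.
Qed.

(* The apex projects onto the midpoint of PQ and has height (sqrt 3 / 2) |PQ|. *)
Lemma equilateral_frame U V W p q v w : 0 < dotp U V V -> 0 <= w ->
  equilateral (frame U V W p 0) (frame U V W q 0) (frame U V W v w) <->
  p <> q /\ (2 * v - p - q) * dotp U V V + 2 * w * dotp U V W = 0 /\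
  2 * w * Rabs (crs U V W) = sqrt 3 * Rabs (q - p) * dotp U V V.
Proof.
  intros HL2 Hw. unfold equilateral.
  set (L2 := dotp U V V) in *. set (d := dotp U V W). set (K := crs U V W).
  rewrite (pdist_sym (frame U V W q 0)), !pdist_frame.
  replace (frame_norm2 U V W (p - q) (0 - 0)) with ((q - p) ^ 2 * L2)
    by (unfold frame_norm2, L2; ring).
  rewrite !Rminus_0_r.
  set (nP := frame_norm2 U V W (v - p) w).
  set (nQ := frame_norm2 U V W (v - q) w).
  assert (Hdiff : nP - nQ = (q - p) * ((2 * v - p - q) * L2 + 2 * w * d))
    by (unfold nP, nQ, frame_norm2, L2, d; ring).
  assert (HP : L2 * nP = ((v - p) * L2 + w * d) ^ 2 + (w * K) ^ 2)
    by apply frame_norm2_complete.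
  assert (0 <= (q - p) ^ 2 * L2) by (apply Rmult_le_pos; [apply pow2_ge_0 | lra]).
  pose proof (frame_norm2_nonneg U V W (v - p) w).
  pose proof (frame_norm2_nonneg U V W (v - q) w).
  rewrite !sqrt_eq_iff by assumption.
  rewrite height_eq_iff_sq by lra. split.
  - intros (Hpos & E1 & E2).
    assert (Hpq : p <> q).
    { intros ->. replace ((q - q) ^ 2 * L2) with 0 in Hpos by ring.
      rewrite sqrt_0 in Hpos. lra. }
    assert (Hmid : (2 * v - p - q) * L2 + 2 * w * d = 0).
    { apply (Rmult_eq_reg_l (q - p)); [rewrite Rmult_0_r; lra | intro; apply Hpq; lra]. }
    split; [exact Hpq | split; [exact Hmid |]].
    replace ((v - p) * L2 + w * d) with ((q - p) * L2 / 2) in HP by lra.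
    rewrite <- E2, <- E1 in HP. nra.
  - intros (Hpq & Hmid & Hh).
    replace ((v - p) * L2 + w * d) with ((q - p) * L2 / 2) in HP by lra.
    assert (EP : nP = (q - p) ^ 2 * L2).
    { apply (Rmult_eq_reg_l L2); [nra | lra]. }
    assert (EQ : nQ = nP) by (rewrite Hmid, Rmult_0_r in Hdiff; lra).
    repeat split; try lra.
    apply sqrt_lt_R0, Rmult_lt_0_compat; [| lra].
    rewrite <- Rsqr_pow2. apply Rlt_0_sqr. lra.
Qed.

Lemma Rmult_Rmax_le r x y z : 0 <= r -> r * x <= z -> r * y <= z -> r * Rmax x y <= z.
Proof. intros. rewrite <- RmaxRmult by assumption. apply Rmax_lub; assumption. Qed.

Lemma apex_base_bound L2 d K p q v w :
  0 < K -> 0 < L2 -> 0 <= p <= 1 -> 0 <= q <= 1 -> 0 <= v -> 0 <= w -> v + w <= 1 ->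
  (2 * v - p - q) * L2 + 2 * w * d = 0 ->
  2 * w * K = sqrt 3 * Rabs (q - p) * L2 ->
  Rabs (q - p) <= 2 * K / (Rmax K (sqrt 3 * d) + Rmax K (sqrt 3 * (L2 - d))).
Proof.
  intros HK HL2 Hp Hq Hv Hw Hvw Hmid Hh.
  assert (HD : 2 * K <= Rmax K (sqrt 3 * d) + Rmax K (sqrt 3 * (L2 - d)))
    by (pose proof (Rmax_l K (sqrt 3 * d)); pose proof (Rmax_l K (sqrt 3 * (L2 - d))); lra).
  apply Rmult_le_reg_r with (Rmax K (sqrt 3 * d) + Rmax K (sqrt 3 * (L2 - d))); [lra|].
  unfold Rdiv. rewrite Rmult_assoc, Rinv_l, Rmult_1_r by lra.
  set (e := Rabs (q - p)) in *.
  assert (He : 0 <= e) by apply Rabs_pos.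
  (* [0 <= v] and [v + w <= 1] put the apex on the inner side of UW and of VW. *)
  assert (Hepq : e <= p + q /\ e <= 2 - p - q) by (split; apply Rabs_le; lra).
  assert (HU : e * (sqrt 3 * d) <= K * (p + q)).
  { assert (E : 2 * K * v * L2 = (K * (p + q) - e * (sqrt 3 * d)) * L2).
    { transitivity (K * ((2 * v - p - q) * L2 + 2 * w * d) + K * (p + q) * L2 - 2 * w * K * d);
        [ring | rewrite Hmid, Hh; ring]. }
    assert (0 <= K * (p + q) - e * (sqrt 3 * d)); [|lra].
    apply Rmult_le_reg_r with L2; [exact HL2 |]. rewrite Rmult_0_l, <- E.
    repeat apply Rmult_le_pos; lra. }
  assert (HV : e * (sqrt 3 * (L2 - d)) <= K * (2 - p - q)).
  { assert (E : 2 * K * (1 - v - w) * L2 = (K * (2 - p - q) - e * (sqrt 3 * (L2 - d))) * L2).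
    { transitivity (K * (2 - p - q) * L2 - K * ((2 * v - p - q) * L2 + 2 * w * d)
                    + 2 * w * K * d - 2 * w * K * L2);
        [ring | rewrite Hmid, Hh; ring]. }
    assert (0 <= K * (2 - p - q) - e * (sqrt 3 * (L2 - d))); [|lra].
    apply Rmult_le_reg_r with L2; [exact HL2 |]. rewrite Rmult_0_l, <- E.
    repeat apply Rmult_le_pos; lra. }
  rewrite Rmult_plus_distr_l.
  replace (2 * K) with (K * (p + q) + K * (2 - p - q)) by ring.
  apply Rplus_le_compat; apply Rmult_Rmax_le; nra.
Qed.

Lemma div_unit_interval x D : 0 < D -> 0 <= x <= D -> 0 <= x / D <= 1.
Proof.
  intros HD Hx. split.
  - apply Rmult_le_pos; [lra | apply Rlt_le, Rinv_0_lt_compat, HD].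
  - apply Rmult_le_reg_r with D; [exact HD |]. field_simplify; lra.
Qed.

Lemma apex_witness L2 d K :
  0 < K -> 0 < L2 ->
  let D := Rmax K (sqrt 3 * d) + Rmax K (sqrt 3 * (L2 - d)) in
  exists p q v w, 0 <= p <= 1 /\ 0 <= q <= 1 /\ 0 <= v /\ 0 <= w /\ v + w <= 1 /\
    p <> q /\ (2 * v - p - q) * L2 + 2 * w * d = 0 /\
    2 * w * K = sqrt 3 * Rabs (q - p) * L2 /\ Rabs (q - p) = 2 * K / D.
Proof.
  intros HK HL2 D.
  set (MU := Rmax K (sqrt 3 * d)) in D. set (MV := Rmax K (sqrt 3 * (L2 - d))) in D.
  assert (HMU : K <= MU /\ sqrt 3 * d <= MU) by (split; [apply Rmax_l | apply Rmax_r]).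
  assert (HMV : K <= MV /\ sqrt 3 * (L2 - d) <= MV) by (split; [apply Rmax_l | apply Rmax_r]).
  assert (HD : 0 < D) by (unfold D; lra).
  pose proof Rlt_sqrt3_0.
  assert (Hqp : (MU + K) / D - (MU - K) / D = 2 * K / D) by (field; lra).
  assert (Hvw : (MU - sqrt 3 * d) / D + sqrt 3 * L2 / D = (MU - sqrt 3 * d + sqrt 3 * L2) / D)
    by (field; lra).
  assert (HKD : 0 < 2 * K / D) by (apply Rdiv_lt_0_compat; lra).
  assert (0 < sqrt 3 * L2) by (apply Rmult_lt_0_compat; lra).
  exists ((MU - K) / D), ((MU + K) / D), ((MU - sqrt 3 * d) / D), (sqrt 3 * L2 / D).
  rewrite Hqp, Rabs_right by lra.
  rewrite Hvw.
  repeat split; try (apply div_unit_interval; unfold D; lra); try lra; field; lra.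
Qed.

(* With K = |crs U V W|, [Rmax K (sqrt 3 * dotp U V W) / K] is max (1, sqrt 3 cot U): the base
   is cut short only at a vertex whose angle is below 60 degrees. *)
Definition wet_side (U V W : pt) : R :=
  2 * Rabs (crs U V W) /
  (Rmax (Rabs (crs U V W)) (sqrt 3 * dotp U V W) +
   Rmax (Rabs (crs U V W)) (sqrt 3 * dotp V U W)) * pdist U V.

Lemma wedged_side_le U V W P Q R0 :
  crs U V W <> 0 -> equilateral P Q R0 -> on_segment U V P -> on_segment U V Q ->
  triangle_subset P Q R0 U V W -> pdist P Q <= wet_side U V W.
Proof.
  intros Hcr Heq HP HQ Hsub.
  assert (HR : in_triangle U V W R0) by (apply Hsub; exists 0, 0, 1; simpl; repeat split; lra).
  apply (on_segment_frame U V W) in HP as (p & Hp & ->).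
  apply (on_segment_frame U V W) in HQ as (q & Hq & ->).
  apply in_triangle_frame in HR as (v & w & Hv & Hw & Hvw & ->).
  pose proof (dotp_self_pos U V W Hcr) as HL2.
  apply equilateral_frame in Heq as (_ & Hmid & Hh); [| exact HL2 | exact Hw].
  rewrite pdist_frame_base. unfold wet_side. rewrite (dotp_swap U V W).
  apply Rmult_le_compat_r; [apply sqrt_pos |].
  exact (apex_base_bound _ _ _ p q v w (Rabs_pos_lt _ Hcr) HL2 Hp Hq Hv Hw Hvw Hmid Hh).
Qed.

Lemma wedged_wet_side U V W :
  crs U V W <> 0 -> wedged_area U V W U V (eq_area (wet_side U V W)).
Proof.
  intro Hcr. pose proof (dotp_self_pos U V W Hcr) as HL2.
  destruct (apex_witness _ (dotp U V W) _ (Rabs_pos_lt _ Hcr) HL2)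
    as (p & q & v & w & Hp & Hq & Hv & Hw & Hvw & Hpq & Hmid & Hh & Hside).
  assert (Hin : forall x y, 0 <= x -> 0 <= y -> x + y <= 1 -> in_triangle U V W (frame U V W x y))
    by (intros x y ? ? ?; apply in_triangle_frame; exists x, y; auto).
  exists (frame U V W p 0), (frame U V W q 0), (frame U V W v w).
  split; [| split; [| split; [| split]]].
  - apply equilateral_frame; auto.
  - apply (on_segment_frame U V W). exists p. auto.
  - apply (on_segment_frame U V W). exists q. auto.
  - apply triangle_subset_of_vertices; apply Hin; lra.
  - rewrite pdist_frame_base, Hside. unfold wet_side. rewrite (dotp_swap U V W). reflexivity.
Qed.

Lemma eq_area_lt s t : 0 <= s < t -> eq_area s < eq_area t.
Proof.
  intros Hst. unfold eq_area. apply Rmult_lt_compat_l.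
  - apply Rdiv_lt_0_compat; [apply Rlt_sqrt3_0 | lra].
  - nra.
Qed.

Lemma eq_area_le s t : 0 <= s <= t -> eq_area s <= eq_area t.
Proof.
  intros [Hs [Hst | <-]]; [apply Rlt_le, eq_area_lt; lra | apply Rle_refl].
Qed.

Lemma is_WET_area_wet_side U V W :
  crs U V W <> 0 -> is_WET_area U V W U V (eq_area (wet_side U V W)).
Proof.
  intro Hcr. split; [exact (wedged_wet_side U V W Hcr) |].
  intros w (P & Q & R0 & Heq & HP & HQ & Hsub & ->).
  apply eq_area_le. split; [apply sqrt_pos | exact (wedged_side_le U V W P Q R0 Hcr Heq HP HQ Hsub)].
Qed.

Lemma in_triangle_rot A B C X : in_triangle B C A X <-> in_triangle A B C X.
Proof.
  split; intros (u & v & w & Hu & Hv & Hw & Hs & H1 & H2);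
    [exists w, u, v | exists v, w, u]; repeat split; lra.
Qed.

Lemma is_WET_area_rot A B C U V W :
  is_WET_area B C A U V W -> is_WET_area A B C U V W.
Proof.
  unfold is_WET_area, wedged_area, triangle_subset.
  setoid_rewrite (in_triangle_rot A B C). trivial.
Qed.

(** * Angles, and the WET side in terms of base angles *)

Lemma cos_sin_acos_frac d K n : 0 < n -> 0 <= K -> d ^ 2 + K ^ 2 = n ^ 2 ->
  cos (acos (d / n)) = d / n /\ sin (acos (d / n)) = K / n.
Proof.
  intros Hn HK E.
  assert (Hu : (d / n) ^ 2 + (K / n) ^ 2 = 1).
  { replace ((d / n) ^ 2 + (K / n) ^ 2) with ((d ^ 2 + K ^ 2) / n ^ 2) by (field; lra).
    rewrite E. field. lra. }
  assert (Hb : -1 <= d / n <= 1) by (pose proof (pow2_ge_0 (K / n)); split; nra).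
  split; [apply cos_acos, Hb |].
  rewrite sin_acos, Rsqr_pow2 by exact Hb.
  replace (1 - (d / n) ^ 2) with ((K / n) ^ 2) by lra.
  apply sqrt_pow2. apply Rmult_le_pos; [exact HK | apply Rlt_le, Rinv_0_lt_compat, Hn].
Qed.

Lemma angle_eq U V W : angle U V W = acos (dotp U V W / (pdist U V * pdist U W)).
Proof. reflexivity. Qed.

Lemma angle_bound U V W : 0 <= angle U V W <= PI.
Proof. apply acos_bound. Qed.

Lemma angle_comm U V W : angle U V W = angle U W V.
Proof. rewrite !angle_eq, dotp_comm, (Rmult_comm (pdist U V)). reflexivity. Qed.

Lemma cos_sin_angle U V W : crs U V W <> 0 ->
  cos (angle U V W) = dotp U V W / (pdist U V * pdist U W) /\
  sin (angle U V W) = Rabs (crs U V W) / (pdist U V * pdist U W).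
Proof.
  intro Hcr. apply cos_sin_acos_frac.
  - apply Rmult_lt_0_compat; [exact (pdist_pos U V W Hcr) | exact (pdist_pos_r U V W Hcr)].
  - apply Rabs_pos.
  - rewrite pow2_abs, Rpow_mult_distr, !pdist_sq, lagrange_identity. reflexivity.
Qed.

Lemma sin_angle_pos U V W : crs U V W <> 0 -> 0 < sin (angle U V W).
Proof.
  intro Hcr. rewrite (proj2 (cos_sin_angle U V W Hcr)).
  apply Rdiv_lt_0_compat; [apply Rabs_pos_lt, Hcr |].
  apply Rmult_lt_0_compat; [apply (pdist_pos U V W) | apply (pdist_pos_r U V W)]; exact Hcr.
Qed.

Lemma angle_sum A B C : crs A B C <> 0 -> angle A B C + angle B C A + angle C A B = PI.
Proof.
  intro Hcr.
  assert (HB : crs B C A <> 0) by (rewrite crs_rot; exact Hcr).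
  assert (HC : crs C A B <> 0) by (rewrite crs_rot; exact HB).
  destruct (cos_sin_angle A B C Hcr) as [ca sa].
  destruct (cos_sin_angle B C A HB) as [cb sb].
  destruct (cos_sin_angle C A B HC) as [cc _].
  rewrite (crs_rot A B C) in sb.
  rewrite (pdist_sym A C) in ca, sa. rewrite (pdist_sym B A) in cb, sb.
  rewrite (pdist_sym C B) in cc.
  pose proof (pdist_pos A B C Hcr). pose proof (pdist_pos B C A HB).
  pose proof (pdist_pos C A B HC).
  pose proof (dotp_add_rot A B C) as Hadd. pose proof (dotp_mul_rot A B C) as Hmul.
  rewrite <- pdist_sq in Hadd, Hmul. rewrite <- (pow2_abs (crs A B C)) in Hmul.
  pose proof (Rabs_pos_lt _ Hcr).
  pose proof (angle_bound A B C). pose proof (angle_bound B C A). pose proof (angle_bound C A B).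
  set (al := angle A B C) in *. set (be := angle B C A) in *. set (ga := angle C A B) in *.
  assert (Hsin : sin (al + be) = Rabs (crs A B C) / (pdist B C * pdist C A)).
  { rewrite sin_plus, ca, sa, cb, sb.
    replace (dotp B C A) with (pdist A B ^ 2 - dotp A B C) by lra. field. lra. }
  assert (Hcos : cos (PI - (al + be)) = dotp C A B / (pdist C A * pdist B C)).
  { rewrite Rtrigo_facts.cos_pi_minus, cos_plus, ca, sa, cb, sb.
    replace (dotp C A B) with
      ((Rabs (crs A B C) ^ 2 - dotp A B C * dotp B C A) / pdist A B ^ 2)
      by (rewrite <- Hmul; field; lra).
    field. lra. }
  assert (Hlt : al + be < PI).
  { apply Rnot_le_lt. intro Hge.
    assert (sin (al + be) <= 0) by (apply sin_le_0; lra).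
    assert (0 < sin (al + be)); [| lra].
    rewrite Hsin. apply Rdiv_lt_0_compat, Rmult_lt_0_compat; assumption. }
  assert (ga = PI - (al + be)) by (apply cos_inj; [lra | lra | rewrite cc, Hcos; reflexivity]).
  lra.
Qed.

Lemma law_of_sines A B C : crs A B C <> 0 ->
  pdist B C * sin (angle C A B) = pdist A B * sin (angle A B C).
Proof.
  intro Hcr. destruct (crs_rot_neq0 A B C Hcr) as [HB HC].
  destruct (cos_sin_angle A B C Hcr) as [_ ->]. destruct (cos_sin_angle C A B HC) as [_ ->].
  rewrite (crs_rot B C A), (crs_rot A B C), (pdist_sym C B), (pdist_sym A C).
  pose proof (pdist_pos A B C Hcr). pose proof (pdist_pos B C A HB).
  pose proof (pdist_pos C A B HC).
  field. lra.
Qed.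

Lemma sin_angle_lt_of_side_lt A B C : crs A B C <> 0 ->
  pdist C A < pdist B C -> sin (angle B C A) < sin (angle A B C).
Proof.
  intros Hcr Hba. destruct (crs_rot_neq0 A B C Hcr) as [HB HC].
  pose proof (law_of_sines B C A HB) as Hlaw.
  pose proof (sin_angle_pos A B C Hcr). pose proof (pdist_pos C A B HC).
  apply Rmult_lt_reg_l with (pdist B C); [lra |]. nra.
Qed.

Lemma sin_add_PI3 x : sin (x + PI / 3) = (sin x + sqrt 3 * cos x) / 2.
Proof. rewrite sin_plus, sin_PI3, cos_PI3. field. Qed.

Lemma sin_sub_PI3 x : sin (x - PI / 3) = (sin x - sqrt 3 * cos x) / 2.
Proof. rewrite sin_minus, sin_PI3, cos_PI3. field. Qed.

Lemma crs_sub_sqrt3_dotp U V W : crs U V W <> 0 ->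
  Rabs (crs U V W) - sqrt 3 * dotp U V W =
  2 * (pdist U V * pdist U W) * sin (angle U V W - PI / 3).
Proof.
  intro Hcr. destruct (cos_sin_angle U V W Hcr) as [Hc Hs].
  pose proof (pdist_pos U V W Hcr). pose proof (pdist_pos_r U V W Hcr).
  rewrite sin_sub_PI3, Hc, Hs. field. lra.
Qed.

Lemma sqrt3_dotp_le_of_angle_ge U V W : crs U V W <> 0 ->
  PI / 3 <= angle U V W -> sqrt 3 * dotp U V W <= Rabs (crs U V W).
Proof.
  intros Hcr Ha. pose proof (crs_sub_sqrt3_dotp U V W Hcr).
  pose proof (angle_bound U V W). pose proof PI_RGT_0.
  pose proof (pdist_pos U V W Hcr). pose proof (pdist_pos_r U V W Hcr).
  assert (0 <= sin (angle U V W - PI / 3)) by (apply sin_ge_0; lra).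
  assert (0 <= pdist U V * pdist U W * sin (angle U V W - PI / 3)) by (apply Rmult_le_pos; nra).
  lra.
Qed.

Lemma crs_lt_sqrt3_dotp_of_angle_lt U V W : crs U V W <> 0 ->
  angle U V W < PI / 3 -> Rabs (crs U V W) < sqrt 3 * dotp U V W.
Proof.
  intros Hcr Ha. pose proof (crs_sub_sqrt3_dotp U V W Hcr).
  pose proof (angle_bound U V W). pose proof PI_RGT_0.
  pose proof (pdist_pos U V W Hcr). pose proof (pdist_pos_r U V W Hcr).
  assert (0 < sin (PI / 3 - angle U V W)) by (apply sin_gt_0; lra).
  replace (angle U V W - PI / 3) with (- (PI / 3 - angle U V W)) in * by ring.
  rewrite sin_neg in *.
  assert (0 < pdist U V * pdist U W * sin (PI / 3 - angle U V W))
    by (repeat apply Rmult_lt_0_compat; assumption).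
  lra.
Qed.

Lemma wet_side_sym U V W : wet_side U V W = wet_side V U W.
Proof.
  unfold wet_side. rewrite (crs_swap_l U V W), Rabs_Ropp, (pdist_sym V U), Rplus_comm.
  reflexivity.
Qed.

Lemma wet_side_wide U V W : crs U V W <> 0 ->
  PI / 3 <= angle U V W -> PI / 3 <= angle V U W -> wet_side U V W = pdist U V.
Proof.
  intros Hcr HU HV.
  assert (HcrV : crs V U W <> 0) by (rewrite crs_swap_l; intro; apply Hcr; lra).
  pose proof (sqrt3_dotp_le_of_angle_ge U V W Hcr HU).
  pose proof (sqrt3_dotp_le_of_angle_ge V U W HcrV HV).
  rewrite (crs_swap_l U V W), Rabs_Ropp in *.
  pose proof (Rabs_pos_lt _ Hcr).
  unfold wet_side. rewrite !Rmax_left by assumption. field. lra.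
Qed.

Lemma wet_side_narrow U V W : crs U V W <> 0 ->
  PI / 3 <= angle U V W -> angle V U W < PI / 3 ->
  wet_side U V W = pdist U V * sin (angle V U W) / sin (angle V U W + PI / 3).
Proof.
  intros Hcr HU HV.
  assert (HcrV : crs V U W <> 0) by (rewrite crs_swap_l; intro; apply Hcr; lra).
  pose proof (sqrt3_dotp_le_of_angle_ge U V W Hcr HU).
  pose proof (crs_lt_sqrt3_dotp_of_angle_lt V U W HcrV HV).
  destruct (cos_sin_angle V U W HcrV) as [Hc Hs].
  pose proof (pdist_pos V U W HcrV). pose proof (pdist_pos_r V U W HcrV).
  rewrite (crs_swap_l U V W), Rabs_Ropp in *.
  pose proof (Rabs_pos_lt _ Hcr).
  unfold wet_side. rewrite Rmax_left, Rmax_right by lra.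
  rewrite sin_add_PI3, Hc, Hs. rewrite (pdist_sym V U) in *.
  field. repeat split; lra.
Qed.

Lemma wet_sides_narrow_apex A B C : crs A B C <> 0 ->
  PI / 3 <= angle A B C -> PI / 3 <= angle B C A -> angle C A B < PI / 3 ->
  let k := pdist A B / sin (angle C A B + PI / 3) in
  0 < k /\ wet_side B C A = k * sin (angle A B C) /\
  wet_side C A B = k * sin (angle B C A) /\ wet_side A B C = k * sin (angle C A B + PI / 3).
Proof.
  intros Hcr Ha Hb Hc k.
  destruct (crs_rot_neq0 A B C Hcr) as [HB HC].
  assert (HC' : crs A C B <> 0) by (rewrite crs_swap_r; intro; apply Hcr; lra).
  pose proof (angle_bound C A B). pose proof PI_RGT_0.
  assert (HS : 0 < sin (angle C A B + PI / 3)) by (apply sin_gt_0; lra).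
  pose proof (pdist_pos A B C Hcr).
  split; [apply Rdiv_lt_0_compat; assumption |].
  split; [| split].
  - rewrite wet_side_narrow, (angle_comm C B A) by (rewrite ?(angle_comm C B A); assumption).
    unfold k. rewrite (law_of_sines A B C Hcr). field. lra.
  - rewrite wet_side_sym, wet_side_narrow, (pdist_sym A C)
      by (rewrite ?(angle_comm A C B); assumption).
    unfold k. rewrite <- (law_of_sines C A B HC). field. lra.
  - rewrite wet_side_wide by (rewrite ?(angle_comm B A C); assumption).
    unfold k. field. lra.
Qed.

(** * Comparing the three sides *)

Lemma sin_sub_sin_apex al be ga : al + be + ga = PI ->
  sin al - sin (ga + PI / 3) = 2 * cos (2 * PI / 3 - be / 2) * sin (al + be / 2 - 2 * PI / 3).
Proof.
  intro Hsum. rewrite form4.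
  replace ((al + (ga + PI / 3)) / 2) with (2 * PI / 3 - be / 2) by lra.
  replace ((al - (ga + PI / 3)) / 2) with (al + be / 2 - 2 * PI / 3) by lra.
  reflexivity.
Qed.

Lemma sin_apex_lt al be ga : al + be + ga = PI -> PI / 3 < be < PI ->
  2 * PI / 3 < al + be / 2 < 5 * PI / 3 -> sin (ga + PI / 3) < sin al.
Proof.
  intros Hsum Hbe Hal. pose proof (sin_sub_sin_apex al be ga Hsum).
  assert (0 < cos (2 * PI / 3 - be / 2)) by (apply cos_gt_0; lra).
  assert (0 < sin (al + be / 2 - 2 * PI / 3)) by (apply sin_gt_0; lra).
  nra.
Qed.

Lemma sin_apex_gt al be ga : al + be + ga = PI -> PI / 3 < be < PI ->
  - PI / 3 < al + be / 2 < 2 * PI / 3 -> sin al < sin (ga + PI / 3).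
Proof.
  intros Hsum Hbe Hal. pose proof (sin_sub_sin_apex al be ga Hsum).
  assert (0 < cos (2 * PI / 3 - be / 2)) by (apply cos_gt_0; lra).
  assert (0 < sin (2 * PI / 3 - al - be / 2)) by (apply sin_gt_0; lra).
  replace (al + be / 2 - 2 * PI / 3) with (- (2 * PI / 3 - al - be / 2)) in * by ring.
  rewrite sin_neg in *. nra.
Qed.

Lemma sin_apex_eq al be ga : al + be + ga = PI ->
  al + be / 2 = 2 * PI / 3 -> sin (ga + PI / 3) = sin al.
Proof. intros. f_equal. lra. Qed.

Lemma eq_area_scale_lt k x y : 0 < k -> 0 <= x < y -> eq_area (k * x) < eq_area (k * y).
Proof. intros. apply eq_area_lt. split; [apply Rmult_le_pos |]; nra. Qed.

Theorem mainTheorem3 (A B C : pt) :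
  nondegenerate A B C ->
  let a := pdist B C in let b := pdist C A in let c := pdist A B in
  let al := angle A B C in let be := angle B C A in
  a > b -> b > c ->
  exists Wa Wb Wc : R,
    is_WET_area A B C B C Wa /\ is_WET_area A B C C A Wb /\
    is_WET_area A B C A B Wc /\
    ((deg 60 < be /\ be < deg 80 /\ deg 80 < al /\ al < deg 90 /\
      al / 2 + be < deg 120 /\ al + be / 2 >= deg 120) ->
       (Wb < Wa /\ Wb < Wc) /\
       (al + be / 2 = deg 120 -> Wa = Wc /\ Wb < Wa) /\
       (al + be / 2 > deg 120 -> Wc < Wa /\ Wb < Wa)) /\
    ((deg 75 < be /\ be < deg 90 /\ deg 80 < al /\ al < deg 90 /\
      al / 2 + be >= deg 120) ->
       (Wb < Wa /\ Wc < Wa) /\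
       (al / 2 + be > deg 120 -> Wc < Wb /\ Wc < Wa) /\
       (al / 2 + be = deg 120 -> Wb = Wc /\ Wc < Wa)).
Proof.
  intros Hcr a b c al be Hab _. subst a b c al be.
  destruct (crs_rot_neq0 A B C Hcr) as [HB HC].
  exists (eq_area (wet_side B C A)), (eq_area (wet_side C A B)), (eq_area (wet_side A B C)).
  split; [apply is_WET_area_rot, is_WET_area_wet_side, HB |].
  split; [apply is_WET_area_rot, is_WET_area_rot, is_WET_area_wet_side, HC |].
  split; [apply is_WET_area_wet_side, Hcr |].
  pose proof (angle_sum A B C Hcr) as Hsum.
  pose proof (wet_sides_narrow_apex A B C Hcr) as Hwet.
  pose proof (sin_angle_pos A B C Hcr). pose proof (sin_angle_pos B C A HB).
  pose proof (sin_angle_lt_of_side_lt A B C Hcr Hab).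
  set (al := angle A B C) in *. set (be := angle B C A) in *. set (ga := angle C A B) in *.
  unfold deg. pose proof PI_RGT_0. split.
  - intros (Hb1 & Hb2 & Ha1 & Ha2 & Hlt & Hge).
    destruct Hwet as (Hk & -> & -> & ->); [lra.. |].
    assert (sin be < sin (ga + PI / 3)) by (apply (sin_apex_gt be al ga); lra).
    repeat split; intros; try (apply eq_area_scale_lt; lra).
    + rewrite (sin_apex_eq al be ga); lra.
    + apply eq_area_scale_lt; [lra |]. split; [lra |]. apply (sin_apex_lt al be ga); lra.
  - intros (Hb1 & Hb2 & Ha1 & Ha2 & Hge).
    destruct Hwet as (Hk & -> & -> & ->); [lra.. |].
    assert (sin (ga + PI / 3) < sin al) by (apply (sin_apex_lt al be ga); lra).
    assert (0 < sin (ga + PI / 3)) by (apply sin_gt_0; lra).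
    repeat split; intros; try (apply eq_area_scale_lt; lra).
    + apply eq_area_scale_lt; [lra |]. split; [lra |]. apply (sin_apex_lt be al ga); lra.
    + rewrite (sin_apex_eq be al ga); lra.
Qed.
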